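(* Let $\Bbbk$ be a field, $V$ a finite-dimensional $\Bbbk$-vector space and $R$ a Hecke symmetry on $V$ with parameter $q$. Assume $\dim\Upsilon^{(n)}=1$ and $\Upsilon^{(n+1)}=0$ for some $n>0$, fix $0\neq t\in\Upsilon^{(n)}$, and let $\theta\in GL(V)$ be defined by $R_n^{(n+1)}R_{n-1}^{(n+1)}\cdots R_1^{(n+1)}(vt)=t\,\theta(v)$ for all $v\in V$. Then $\theta\otimes\theta$ commutes with $R$. In particular, $\theta$ extends to automorphisms of $\Lambda(V,R)$ and of $\mathbb{S}(V,R)$.
   Context: A Hecke symmetry on $V$ with parameter $0\neq q\in\Bbbk$ is a linear map $R:V\otimes V\to V\otimes V$ satisfying $(R\otimes\mathrm{Id}_V)(\mathrm{Id}_V\otimes R)(R\otimes\mathrm{Id}_V)=(\mathrm{Id}_V\otimes R)(R\otimes\mathrm{Id}_V)(\mathrm{Id}_V\otimes R)$ and $(R-q\,\mathrm{Id})(R+\mathrm{Id})=0$ ($q=-1$ allowed). $\mathbb{S}(V,R)$ and $\Lambda(V,R)$ are the quotients of the tensor algebra $\mathbb{T}(V)$ by the ideals generated by $\mathrm{Im}(R-q\,\mathrm{Id})$ and $\mathrm{Ker}(R-q\,\mathrm{Id})$ respectively. In $\mathbb{T}(V)$ products are written $ab=a\otimes b$. For $p\ge2$, $1\le i\le p-1$, $R_i^{(p)}=\mathrm{Id}_V^{\otimes(i-1)}\otimes R\otimes\mathrm{Id}_V^{\otimes(p-i-1)}$. $\Upsilon^{(0)}=\Bbbk$, $\Upsilon^{(1)}=V$,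 $\Upsilon^{(p)}=\bigcap_{i=1}^{p-1}(R_i^{(p)}-q\,\mathrm{Id})V^{\otimes p}$ ($p\ge2$). The operator $\theta$ is well defined and invertible under the hypotheses. *)

From HB Require Import structures.
From mathcomp Require Import all_boot all_order all_algebra.
Set Implicit Arguments. Unset Strict Implicit. Unset Printing Implicit Defensive.
Import GRing.Theory.
Local Open Scope ring_scope.

(* V = 'rV[K]_d (a finite-dimensional K-space with a fixed basis
   e_0,...,e_{d-1}).  V^{(x)p} is modelled as row vectors indexed by words
   w : 'I_p -> 'I_d (basis e_{w 0} (x) ... (x) e_{w (p-1)}).
   Linear maps act on the right on row vectors: f(x) = x *m F, so
   F u w = coefficient of e_w in f(e_u), and "f then g" is  F *m G.
   Subspaces are row spaces of matrices (mxalgebra, %MS). *)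

Definition word (d p : nat) := {ffun 'I_p -> 'I_d}.
Definition N (d p : nat) : nat := #|{: word d p}|.
Definition tens (K : fieldType) (d p : nat) := 'rV[K]_(N d p).

Definition coef (K : fieldType) d p (x : tens K d p) (w : word d p) : K :=
  x 0 (enum_rank w).

(* v (x) x  for v in V, x in V^{(x)p} *)
Definition tmull (K : fieldType) d p (v : 'rV[K]_d) (x : tens K d p) : tens K d p.+1 :=
  \row_k let w : word d p.+1 := enum_val k in
    v 0 (w ord0) * coef x [ffun j : 'I_p => w (lift ord0 j)].

(* x (x) v  for x in V^{(x)p}, v in V *)
Definition tmulr (K : fieldType) d p (x : tens K d p) (v : 'rV[K]_d) : tens K d p.+1 :=
  \row_k let w : word d p.+1 := enum_val k in
    coef x [ffun j : 'I_p => w (widen_ord (leqnSn p) j)] * v 0 (w ord_max).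

(* compat u w a b : the words u, w of length p coincide outside the positions
   i, i+1 (1-indexed), and (u_i,u_{i+1}) = a, (w_i, w_{i+1}) = b. *)
Definition compat d p (i : nat) (u w : word d p) (a b : word d 2) : bool :=
  [forall j : 'I_p,
     if val j == i.-1 then (u j == a ord0) && (w j == b ord0)
     else if val j == i then (u j == a ord_max) && (w j == b ord_max)
     else u j == w j].

(* For F an endomorphism of V (x) V, liftop F p i = Id^{(x)(i-1)} (x) F (x) Id^{(x)(p-i-1)}
   acting on V^{(x)p}  (meaningful for 1 <= i <= p-1). *)
Definition liftop (K : fieldType) d (F : 'M[K]_(N d 2)) (p i : nat) : 'M[K]_(N d p) :=
  \matrix_(x, y) \sum_(a : word d 2) \sum_(b : word d 2)
     (if compat i (enum_val x : word d p) (enum_val y : word d p) a b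
      then F (enum_rank a) (enum_rank b) else 0).

Notation Rop R p i := (liftop R p i).

Definition hecke (K : fieldType) d (R : 'M[K]_(N d 2)) (q : K) : Prop :=
  Rop R 3 1 *m Rop R 3 2 *m Rop R 3 1 = Rop R 3 2 *m Rop R 3 1 *m Rop R 3 2
  /\ (R - q%:M) *m (R + 1%:M) = 0.

Definition Ups (K : fieldType) d (R : 'M[K]_(N d 2)) (q : K) (p : nat) : 'M[K]_(N d p) :=
  (\bigcap_(1 <= i < p) (Rop R p i - q%:M))%MS.

Definition Rchain (K : fieldType) d (R : 'M[K]_(N d 2)) (n : nat) (x : tens K d n.+1)
  : tens K d n.+1 :=
  foldl (fun y i => y *m Rop R n.+1 i) x (iota 1 n).

Definition tpow (K : fieldType) d (th : 'M[K]_d) (p : nat) : 'M[K]_(N d p) :=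
  \matrix_(x, y) \prod_(j : 'I_p) th ((enum_val x : word d p) j) ((enum_val y : word d p) j).

(* Degree-p homogeneous component of the two-sided ideal of T(V) generated by
   the subspace W = rowspace(M) of V (x) V:
   sum_{i=1}^{p-1} V^{(x)(i-1)} (x) W (x) V^{(x)(p-i-1)}, where
   V^{(x)(i-1)} (x) W (x) V^{(x)(p-i-1)} is the image of Id (x) M (x) Id. *)
Definition idealComp (K : fieldType) d (M : 'M[K]_(N d 2)) (p : nat) : 'M[K]_(N d p) :=
  (\sum_(1 <= i < p) liftop M p i)%MS.

From HB Require Import structures.
From mathcomp Require Import all_boot all_order all_algebra.
From mathcomp Require Import zify.
Import GRing.Theory.
Local Open Scope ring_scope.

(* Write n = m + 1 and L_i for R_i^(n+2).  For x in V (x) V put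
   X x = x (x) t and Y y = t (x) y, and C = (L_2 ... L_(n+1)) (L_1 ... L_n)
   (maps act on the right).  Applying the defining identity of theta twice
   gives (X x) C = Y (x (theta (x) theta)), and the braid relations give
   L_1 C = C L_(n+1).  As (X x) L_1 = X (x R), (Y y) L_(n+1) = Y (y R) and Y is
   injective (t <> 0), theta (x) theta commutes with R.  The Hecke relation
   with q <> 0 makes R invertible, hence the chain R_n ... R_1 and then theta
   are invertible; so theta^(x)p is invertible and maps each homogeneous
   component of the ideals generated by Ker (R - q) and Im (R - q), both
   stable under theta (x) theta, onto itself.  The hypotheses on Upsilon are
   only needed for theta to exist. *)

Set Implicit Arguments. Unset Strict Implicit.

Section Words.
Variable d : nat.

(* A window of length k.+1 starting at position a (positions are 0-based). *)
Definition in_window (a k j : nat) := ((a <= j) && (j < a + k.+1))%N.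

Definition subword p k a (u : word d p.+1) : word d k.+1 :=
  [ffun i : 'I_k.+1 => u (inord (a + i))].

Definition splice p k a (u : word d p.+1) (s : word d k.+1) : word d p.+1 :=
  [ffun j : 'I_p.+1 => if in_window a k j then s (inord (j - a)) else u j].

Definition agree_off p a k (u w : word d p.+1) :=
  [forall j : 'I_p.+1, ~~ in_window a k j ==> (u j == w j)].

Definition agree_off2 p a k b l (u w : word d p.+1) :=
  [forall j : 'I_p.+1, (~~ in_window a k j) && (~~ in_window b l j) ==> (u j == w j)].

Arguments subword {p} k a u.
Arguments splice {p k} a u s.
Arguments agree_off {p} a k u w.
Arguments agree_off2 {p} a k b l u w.

Lemma subword_splice p k a u s : (a + k.+1 <= p.+1)%N ->
  subword k a (@splice p k a u s) = s.
Proof.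
move=> h; apply/ffunP => i; have hi := ltn_ord i.
rewrite !ffunE (@inordK p); last lia.
have -> : in_window a k (a + i) by rewrite /in_window; lia.
by congr (s _); apply: val_inj; rewrite /= (@inordK k); lia.
Qed.

Lemma subword_in p k a (u : word d p.+1) (j : 'I_p.+1) : in_window a k j ->
  subword k a u (inord (j - a)) = u j.
Proof.
rewrite /in_window => /andP[h1 h2]; rewrite ffunE; congr (u _); apply: val_inj.
by rewrite /= inordK; (try rewrite inordK); have := ltn_ord j; lia.
Qed.

Lemma eq_spliceE p k a (u z : word d p.+1) s : (a + k.+1 <= p.+1)%N ->
  (z == splice a u s) = (subword k a z == s) && agree_off a k z u.
Proof.
move=> h; apply/eqP/andP => [->|[/eqP <- /forallP H]].
  split; first by rewrite subword_splice.
  by apply/forallP => j; apply/implyP => hj; rewrite ffunE (negbTE hj).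
apply/ffunP => j; rewrite ffunE; case: ifP => hj.
  by rewrite subword_in.
by apply/eqP; have := H j; rewrite hj.
Qed.

Lemma eq_subword_agree p k a (u w : word d p.+1) :
  (u == w) = agree_off a k u w && (subword k a u == subword k a w).
Proof.
apply/eqP/andP => [->|[/forallP H /eqP E]].
  by split=> //; apply/forallP => j; apply/implyP.
apply/ffunP => j; case hj: (in_window a k j).
  by rewrite -(subword_in u hj) E subword_in.
by apply/eqP; have := H j; rewrite hj.
Qed.

Lemma subword_splice_disj p k a l b (u : word d p.+1) s :
  (a + k.+1 <= p.+1)%N -> ((a + k.+1 <= b) || (b + l.+1 <= a))%N ->
  subword k a (@splice p l b u s) = subword k a u.
Proof.
move=> h hd; apply/ffunP => i; rewrite !ffunE.
have -> // : in_window b l (inord (a + i) : 'I_p.+1) = false.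
rewrite /in_window inordK; have := ltn_ord i; lia.
Qed.

Lemma subword_splice_in p k a l b (u : word d p.+1) s :
  (a + k.+1 <= p.+1)%N -> (a <= b)%N -> (b + l.+1 <= a + k.+1)%N ->
  subword k a (@splice p l b u s) = @splice k l (b - a) (subword k a u) s.
Proof.
move=> h1 h2 h3; apply/ffunP => i; rewrite !ffunE.
have hi := ltn_ord i.
rewrite /in_window inordK; last lia.
have -> : ((b <= a + i) && (a + i < b + l.+1))%N = ((b - a <= i) && (i < b - a + l.+1))%N.
  by apply/idP/idP; lia.
case: ifP => // _; congr (s (inord _)); lia.
Qed.

Lemma subword_subword p k1 k2 a b (u : word d p.+1) :
  (a + k2.+1 <= p.+1)%N -> (b + k1.+1 <= k2.+1)%N ->
  subword k1 b (subword k2 a u) = subword k1 (a + b) u.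
Proof.
move=> h1 h2; apply/ffunP => i; rewrite !ffunE; congr (u _); apply: val_inj.
have hi := ltn_ord i; rewrite /= !inordK; lia.
Qed.

Lemma agree_off_subword p k1 k2 a b (u w : word d p.+1) :
  (a + k2.+1 <= p.+1)%N -> (b + k1.+1 <= k2.+1)%N ->
  agree_off a k2 u w && agree_off b k1 (subword k2 a u) (subword k2 a w) = agree_off (a + b) k1 u w.
Proof.
move=> h1 h2; apply/andP/forallP => [[/forallP H1 /forallP H2] j|H].
  apply/implyP => hj; case hja: (in_window a k2 j); last by have := H1 j; rewrite hja.
  have hi : ~~ in_window b k1 (inord (j - a) : 'I_k2.+1).
    move: hj hja; rewrite /in_window => hj hja; rewrite (@inordK k2); lia.
  by have := H2 (inord (j - a)); rewrite hi /= !subword_in.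
split; apply/forallP => j; apply/implyP => hj.
  have /implyP := H j; apply; move: hj; rewrite /in_window; lia.
have hj' := ltn_ord j.
rewrite !ffunE; have /implyP := H (inord (a + j)); apply.
move: hj; rewrite /in_window (@inordK p); lia.
Qed.

Lemma agree_off_splice_disj p a k b l (u w : word d p.+1) s :
  (a + k.+1 <= p.+1)%N -> (b + l.+1 <= p.+1)%N ->
  ((a + k.+1 <= b) || (b + l.+1 <= a))%N ->
  agree_off a k u (@splice p l b w s) = (subword l b u == s) && agree_off2 a k b l u w.
Proof.
move=> h1 h2 hd; apply/forallP/andP => [H|[/eqP <- /forallP H] j].
  split.
    apply/eqP/ffunP => i; have hi := ltn_ord i.
    have := H (inord (b + i)); rewrite !ffunE /in_window !inordK; try lia.
    have -> : ((a <= b + i) && (b + i < a + k.+1))%N = false by lia.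
    have -> : ((b <= b + i) && (b + i < b + l.+1))%N = true by lia.
    move/eqP => ->; congr (s _); apply: val_inj; rewrite /= !inordK; lia.
  apply/forallP => j; apply/implyP => /andP[hj1 hj2].
  by have := H j; rewrite hj1 /= ffunE (negbTE hj2).
apply/implyP => hj; rewrite ffunE; case: ifP => hj2.
  by rewrite subword_in.
by have := H j; rewrite hj hj2.
Qed.

Lemma agree_off2C p a k b l (u w : word d p.+1) :
  agree_off2 a k b l u w = agree_off2 b l a k u w.
Proof. by apply: eq_forallb => j; rewrite andbC. Qed.

End Words.

Section Mx.
Variables (K : fieldType) (d : nat).

Notation rk := enum_rank.

Lemma sum_words p (F : 'I_(N d p) -> K) :
  \sum_(k : 'I_(N d p)) F k = \sum_(w : word d p) F (rk w).
Proof.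
rewrite (reindex (@enum_rank (word d p))) //.
by exists enum_val => x _; rewrite ?enum_rankK ?enum_valK.
Qed.

Lemma mulmx_wordE m p (A : 'M[K]_(m, N d p)) (B : 'M[K]_(N d p)) i w :
  (A *m B) i (rk w) = \sum_(z : word d p) A i (rk z) * B (rk z) (rk w).
Proof. by rewrite mxE sum_words. Qed.

Lemma eq_mx_words p (A B : 'M[K]_(N d p)) :
  (forall u w : word d p, A (rk u) (rk w) = B (rk u) (rk w)) -> A = B.
Proof.
move=> H; apply/matrixP => x y.
by rewrite -(enum_valK x) -(enum_valK y) H.
Qed.

Lemma eq_row_words m p (A B : 'M[K]_(m, N d p)) :
  (forall i (w : word d p), A i (rk w) = B i (rk w)) -> A = B.
Proof. by move=> H; apply/matrixP => x y; rewrite -(enum_valK y) H. Qed.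

(* Th^(x)a (x) G (x) Th^(x)(p-a-k) on V^(x)(p+1). *)
Definition window_op p k (Th : 'M[K]_d) (G : 'M[K]_(N d k.+1)) (a : nat) :
    'M[K]_(N d p.+1) :=
  \matrix_(x, y)
    let u : word d p.+1 := enum_val x in let w : word d p.+1 := enum_val y in
    (\prod_(j : 'I_p.+1 | ~~ in_window a k j) Th (u j) (w j))
      * G (rk (subword k a u)) (rk (subword k a w)).

Lemma window_opE p k Th G a (u w : word d p.+1) :
  @window_op p k Th G a (rk u) (rk w) =
  (\prod_(j : 'I_p.+1 | ~~ in_window a k j) Th (u j) (w j))
    * G (rk (subword k a u)) (rk (subword k a w)).
Proof. by rewrite mxE !enum_rankK. Qed.

Lemma prod_mx1_off p a k (u w : word d p.+1) :
  \prod_(j : 'I_p.+1 | ~~ in_window a k j) (1%:M : 'M[K]_d) (u j) (w j) = (agree_off a k u w)%:R.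
Proof.
case E: (agree_off a k u w).
  by apply: big1 => j hj; rewrite mxE; have /implyP/(_ hj) -> := forallP E j.
move/negbT: E; rewrite negb_forall => /existsP[j]; rewrite negb_imply => /andP[hj hn].
by rewrite (bigD1 j) //= mxE (negbTE hn) mul0r.
Qed.

Lemma window_op1E p k G a (u w : word d p.+1) :
  @window_op p k 1%:M G a (rk u) (rk w)
  = (agree_off a k u w)%:R * G (rk (subword k a u)) (rk (subword k a w)).
Proof. by rewrite window_opE prod_mx1_off. Qed.

Lemma mulmx_window_op1 m p k (A : 'M[K]_(m, N d p.+1)) G a i (w : word d p.+1) :
  (a + k.+1 <= p.+1)%N ->
  (A *m @window_op p k 1%:M G a) i (rk w) =
  \sum_(s : word d k.+1) A i (rk (splice a w s)) * G (rk s) (rk (subword k a w)).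
Proof.
move=> h; rewrite mulmx_wordE (partition_big (fun z => subword k a z) xpredT) //=.
apply: eq_bigr => s _; rewrite (bigD1 (splice a w s)) /=; last by rewrite subword_splice ?eqxx.
rewrite big1 ?addr0 => [|z /andP[/eqP hz hn]].
  rewrite window_op1E subword_splice //.
  have -> : agree_off a k (splice a w s) w.
    by have := eqxx (splice a w s); rewrite eq_spliceE // => /andP[].
  by rewrite mul1r.
rewrite window_op1E; move: hn; rewrite eq_spliceE // hz eqxx /= => /negbTE ->.
by rewrite mul0r mulr0.
Qed.

Lemma prod_window_indicator p k a (z : word d p.+1) (s : word d k.+1) :
  (a + k.+1 <= p.+1)%N ->
  \prod_(j : 'I_p.+1 | in_window a k j) ((z j == s (inord (j - a)))%:R : K)
  = (subword k a z == s)%:R.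
Proof.
move=> h; case E: (subword k a z == s).
  by apply: big1 => j hj; rewrite -(eqP E) subword_in // eqxx.
move/negbT: E => E.
have : ~~ [forall i, subword k a z i == s i].
  by apply: contra E => /forallP H; apply/eqP/ffunP => i; apply/eqP.
rewrite negb_forall => /existsP[i hi]; have hik := ltn_ord i.
have hj : in_window a k (inord (a + i) : 'I_p.+1) by rewrite /in_window (@inordK p); lia.
rewrite (bigD1 (inord (a + i) : 'I_p.+1)) //=.
have -> : (inord (@inord p (a + i) - a) : 'I_k.+1) = i.
  by apply: ord_inj; rewrite (@inordK k) (@inordK p); lia.
by move: hi; rewrite ffunE => /negbTE ->; rewrite mul0r.
Qed.

Lemma sum_fixed_window p k a (s : word d k.+1) (f : 'I_p.+1 -> 'I_d -> K) :
  (a + k.+1 <= p.+1)%N ->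
  \sum_(z : word d p.+1 | subword k a z == s)
      \prod_(j : 'I_p.+1 | ~~ in_window a k j) f j (z j) =
  \prod_(j : 'I_p.+1 | ~~ in_window a k j) \sum_(c : 'I_d) f j c.
Proof.
move=> h.
pose f' (j : 'I_p.+1) (c : 'I_d) :=
  if in_window a k j then ((c == s (inord (j - a)))%:R : K) else f j c.
have -> : \prod_(j : 'I_p.+1 | ~~ in_window a k j) \sum_(c : 'I_d) f j c
          = \prod_(j : 'I_p.+1) \sum_(c : 'I_d) f' j c.
  rewrite [in RHS](bigID (fun j : 'I_p.+1 => in_window a k j)) /=.
  rewrite [X in _ = X * _]big1 ?mul1r => [|j hj].
    by apply: eq_bigr => j hj; apply: eq_bigr => c _; rewrite /f' (negbTE hj).
  rewrite /f' hj (bigD1 (s (inord (j - a)))) //= eqxx big1 ?addr0 // => c hc.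
  by rewrite (negbTE hc).
rewrite bigA_distr_bigA /= big_mkcond /=; apply: eq_bigr => z _.
rewrite [in RHS](bigID (fun j : 'I_p.+1 => in_window a k j)) /=.
have -> : \prod_(j : 'I_p.+1 | in_window a k j) f' j (z j) = (subword k a z == s)%:R.
  by rewrite -prod_window_indicator //; apply: eq_bigr => j hj; rewrite /f' hj.
have -> : \prod_(j : 'I_p.+1 | ~~ in_window a k j) f' j (z j)
          = \prod_(j : 'I_p.+1 | ~~ in_window a k j) f j (z j).
  by apply: eq_bigr => j hj; rewrite /f' (negbTE hj).
by case: (subword k a z == s); rewrite ?mul1r ?mul0r.
Qed.

Lemma window_op_mul p k Th Ph G H a : (a + k.+1 <= p.+1)%N ->
  @window_op p k Th G a *m @window_op p k Ph H a = @window_op p k (Th *m Ph) (G *m H) a.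
Proof.
move=> h; apply: eq_mx_words => u w.
rewrite mulmx_wordE (partition_big (fun z => subword k a z) xpredT) //=.
rewrite window_opE mulmx_wordE mulr_sumr; apply: eq_bigr => s _.
transitivity (\sum_(z : word d p.+1 | subword k a z == s)
   (\prod_(j : 'I_p.+1 | ~~ in_window a k j) (Th (u j) (z j) * Ph (z j) (w j))) *
   (G (rk (subword k a u)) (rk s) * H (rk s) (rk (subword k a w)))).
  by apply: eq_bigr => z /eqP hz; rewrite !window_opE hz mulrACA -big_split.
rewrite -mulr_suml; congr (_ * _).
rewrite (@sum_fixed_window p k a s (fun j c => Th (u j) c * Ph c (w j))) //.
by apply: eq_bigr => j _; rewrite mxE.
Qed.

Lemma window_prod p k a (F : 'I_p.+1 -> K) : (a + k.+1 <= p.+1)%N ->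
  \prod_(j : 'I_p.+1 | in_window a k j) F j = \prod_(i : 'I_k.+1) F (inord (a + i)).
Proof.
move=> h.
rewrite (reindex_onto (fun i : 'I_k.+1 => (inord (a + i) : 'I_p.+1))
                      (fun j : 'I_p.+1 => (inord (j - a) : 'I_k.+1))) /=.
  apply: eq_bigl => i; have hi := ltn_ord i.
  rewrite /in_window (@inordK p); last lia.
  apply/andP; split; first lia.
  by apply/eqP/ord_inj; rewrite (@inordK k); lia.
move=> j; rewrite /in_window => /andP[h1 h2]; apply: ord_inj.
have hj := ltn_ord j; rewrite (@inordK p) (@inordK k); lia.
Qed.

Lemma tpowE (th : 'M[K]_d) p (u w : word d p) :
  tpow th p (rk u) (rk w) = \prod_(j : 'I_p) th (u j) (w j).
Proof. by rewrite mxE !enum_rankK. Qed.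

Lemma tpow_window_op (th : 'M[K]_d) p a : (a + 2 <= p.+1)%N ->
  tpow th p.+1 = @window_op p 1 th (tpow th 2) a.
Proof.
move=> h; apply: eq_mx_words => u w; rewrite tpowE window_opE tpowE.
rewrite (bigID (fun j : 'I_p.+1 => in_window a 1 j)) /= mulrC; congr (_ * _).
rewrite window_prod //; apply: eq_bigr => i _; rewrite !ffunE //.
Qed.

Lemma tpow_mul (A B : 'M[K]_d) p : tpow A p *m tpow B p = tpow (A *m B) p.
Proof.
apply: eq_mx_words => u w; rewrite mulmx_wordE [RHS]tpowE.
under [RHS]eq_bigr => j _ do rewrite mxE.
rewrite bigA_distr_bigA /=; apply: eq_bigr => z _.
by rewrite !tpowE -big_split.
Qed.

Lemma tpow1 p : tpow (1%:M : 'M[K]_d) p = 1%:M.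
Proof.
apply: eq_mx_words => u w; rewrite tpowE [RHS]mxE (inj_eq enum_rank_inj).
case E: (u == w).
  by rewrite (eqP E); apply: big1 => j _; rewrite mxE eqxx.
have : ~~ [forall j, u j == w j].
  by apply: contra (negbT E) => /forallP H; apply/eqP/ffunP => j; apply/eqP.
rewrite negb_forall => /existsP[j hj].
by rewrite (bigD1 j) //= mxE (negbTE hj) mul0r.
Qed.

Lemma window_op11 p k a : (a + k.+1 <= p.+1)%N ->
  @window_op p k 1%:M 1%:M a = 1%:M.
Proof.
move=> h; apply: eq_mx_words => u w; rewrite window_op1E !mxE !(inj_eq enum_rank_inj).
by rewrite [in RHS](eq_subword_agree k a); case: (agree_off a k u w); rewrite ?mul1r ?mul0r.
Qed.

Lemma window_op_nested p k1 k2 a b (G : 'M[K]_(N d k1.+1)) :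
  (a + k2.+1 <= p.+1)%N -> (b + k1.+1 <= k2.+1)%N ->
  @window_op p k2 1%:M (@window_op k2 k1 1%:M G b) a = @window_op p k1 1%:M G (a + b).
Proof.
move=> h1 h2; apply: eq_mx_words => u w; rewrite !window_op1E !subword_subword //.
rewrite -(agree_off_subword u w h1 h2).
by case: (agree_off a k2 u w); case: (agree_off b k1 _ _); rewrite /= ?mul1r ?mul0r.
Qed.

Lemma window_op_comm p k l a b (G : 'M[K]_(N d k.+1)) (H : 'M[K]_(N d l.+1)) :
  (a + k.+1 <= b)%N -> (b + l.+1 <= p.+1)%N ->
  @window_op p k 1%:M G a *m @window_op p l 1%:M H b
  = @window_op p l 1%:M H b *m @window_op p k 1%:M G a.
Proof.
move=> h1 h2; have h3 : (a + k.+1 <= p.+1)%N by lia.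
apply: eq_mx_words => u w; rewrite !mulmx_window_op1 //.
under eq_bigr => s _ do
  rewrite window_op1E subword_splice_disj ?h1 // agree_off_splice_disj ?h1 //.
under [in RHS]eq_bigr => s _ do
  rewrite window_op1E subword_splice_disj ?h1 ?orbT // agree_off_splice_disj ?h1 ?orbT //.
rewrite (bigD1 (subword l b u)) //= big1 ?addr0 => [|s hs]; last first.
  by rewrite eq_sym (negbTE hs) mul0r mul0r.
rewrite [in RHS](bigD1 (subword k a u)) //= [in RHS]big1 ?addr0 => [|s hs]; last first.
  by rewrite eq_sym (negbTE hs) mul0r mul0r.
by rewrite !eqxx /= agree_off2C mulrAC.
Qed.

Lemma word2_eqE (x y : word d 2) :
  (x == y) = (x ord0 == y ord0) && (x ord_max == y ord_max).
Proof.
apply/eqP/andP => [->|[/eqP h0 /eqP h1]]; first by rewrite !eqxx.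
apply/ffunP => z; case: z => [[|[|//]] hz].
  by rewrite (_ : Ordinal hz = ord0) //; apply: val_inj.
by rewrite (_ : Ordinal hz = ord_max) //; apply: val_inj.
Qed.

Lemma compatE p i (u w : word d p.+1) (x y : word d 2) :
  (1 <= i)%N -> (i <= p)%N ->
  compat i u w x y
  = (x == subword 1 i.-1 u) && (y == subword 1 i.-1 w) && agree_off i.-1 1 u w.
Proof.
move=> h1 h2.
have r0 : forall v : word d p.+1, subword 1 i.-1 v ord0 = v (inord i.-1).
  by move=> v; rewrite ffunE addn0.
have r1 : forall v : word d p.+1, subword 1 i.-1 v ord_max = v (inord i).
  by move=> v; rewrite ffunE; congr (v (inord _)); rewrite /=; lia.
rewrite !word2_eqE !r0 !r1.
have v0 : val (inord i.-1 : 'I_p.+1) = i.-1 by rewrite /= (@inordK p) //; lia.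
have v1 : val (inord i : 'I_p.+1) = i by rewrite /= (@inordK p) //; lia.
apply/forallP/idP
  => [H | /andP[/andP[/andP[/eqP e0 /eqP e1] /andP[/eqP f0 /eqP f1]] /forallP H] j].
  have := H (inord i.-1); rewrite v0 eqxx => /andP[/eqP -> /eqP ->].
  have := H (inord i); rewrite v1 eqxx.
  have -> : (i == i.-1) = false by lia.
  move=> /andP[/eqP -> /eqP ->]; rewrite !eqxx /=.
  apply/forallP => j; apply/implyP => hj; have := H j.
  have hj' : (nat_of_ord j != i.-1) && (nat_of_ord j != i).
    by move: hj; rewrite /in_window; lia.
  by case/andP: hj' => /negbTE -> /negbTE ->.
case: ifP => [/eqP hj|hj].
  have -> : j = inord i.-1 by apply: ord_inj; rewrite v0.
  by rewrite e0 f0 !eqxx.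
case: ifP => [/eqP hj'|hj'].
  have -> : j = inord i by apply: ord_inj; rewrite v1.
  by rewrite e1 f1 !eqxx.
have /implyP := H j; apply; rewrite /in_window.
by move/negbT: hj; move/negbT: hj' => /= hj' hj; lia.
Qed.

Lemma liftop_window_op (F : 'M[K]_(N d 2)) p i : (1 <= i)%N -> (i <= p)%N ->
  liftop F p.+1 i = @window_op p 1 1%:M F i.-1.
Proof.
move=> h1 h2; apply: eq_mx_words => u w; rewrite window_op1E mxE !enum_rankK.
under eq_bigr => x _ do under eq_bigr => y _ do rewrite compatE //.
rewrite (bigD1 (subword 1 i.-1 u)) //= [X in _ + X]big1 ?addr0 => [|x hx]; last first.
  by apply: big1 => y _; rewrite (negbTE hx).
rewrite eqxx /= (bigD1 (subword 1 i.-1 w)) //= [X in _ + X]big1 ?addr0 => [|y hy]; last first.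
  by rewrite (negbTE hy).
by rewrite !eqxx /=; case: (agree_off _ _ u w); rewrite ?mul1r ?mul0r.
Qed.

Lemma liftop_braid (R : 'M[K]_(N d 2)) p i :
  Rop R 3 1 *m Rop R 3 2 *m Rop R 3 1 = Rop R 3 2 *m Rop R 3 1 *m Rop R 3 2 ->
  (1 <= i < p)%N ->
  liftop R p.+1 i *m liftop R p.+1 i.+1 *m liftop R p.+1 i =
  liftop R p.+1 i.+1 *m liftop R p.+1 i *m liftop R p.+1 i.+1.
Proof.
move=> braidR /andP[i_gt0 i_lt_p].
have -> : liftop R p.+1 i = @window_op p 2 1%:M (liftop R 3 1) i.-1.
  by rewrite !liftop_window_op //= ?window_op_nested ?addn0 //; lia.
have -> : liftop R p.+1 i.+1 = @window_op p 2 1%:M (liftop R 3 2) i.-1.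
  rewrite !liftop_window_op //= ?window_op_nested //; try lia.
  by congr window_op; lia.
by rewrite !window_op_mul ?mulmx1 ?braidR //; lia.
Qed.

Lemma liftop_comm (F G : 'M[K]_(N d 2)) p i j :
  (1 <= i)%N -> (i.+2 <= j <= p)%N ->
  liftop F p.+1 i *m liftop G p.+1 j = liftop G p.+1 j *m liftop F p.+1 i.
Proof.
move=> i_gt0 /andP[ij jp]; rewrite !liftop_window_op; try lia.
by apply: window_op_comm; lia.
Qed.

Lemma liftop_unitmx (R : 'M[K]_(N d 2)) p i :
  R \in unitmx -> (1 <= i <= p)%N -> liftop R p.+1 i \in unitmx.
Proof.
move=> R_unit /andP[i_gt0 i_le_p]; rewrite liftop_window_op //.
apply: (proj1 (@mulmx1_unit _ _ _ (@window_op p 1 1%:M (invmx R) i.-1) _)).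
by rewrite window_op_mul ?mulmx1 ?mulmxV ?window_op11 //; lia.
Qed.

Lemma tpow_unitmx (th : 'M[K]_d) p : th \in unitmx -> tpow th p \in unitmx.
Proof.
move=> th_unit; apply: (proj1 (@mulmx1_unit _ _ _ (tpow (invmx th) p) _)).
by rewrite tpow_mul mulmxV // tpow1.
Qed.

Lemma idealComp_tpow_eq (M : 'M[K]_(N d 2)) (th : 'M[K]_d) p :
  (M *m tpow th 2 <= M)%MS -> th \in unitmx ->
  (idealComp M p *m tpow th p == idealComp M p)%MS.
Proof.
case/submxP=> Y MthY th_unit.
have sub : (idealComp M p *m tpow th p <= idealComp M p)%MS.
  rewrite /idealComp big_geq_mkord sumsmxMr; apply/sumsmx_subP => i /= i_gt0.
  apply: (sumsmx_sup i) => //.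
  case: p => [|p] in i i_gt0 *; first by have := ltn_ord i.
  have i_le_p : (i <= p)%N by have := ltn_ord i; lia.
  rewrite (liftop_window_op M) // (@tpow_window_op th p i.-1); last lia.
  rewrite window_op_mul; last lia.
  rewrite mul1mx MthY.
  have := @window_op_mul p 1 th 1%:M Y M i.-1; rewrite mulmx1 => <-; last lia.
  exact: submxMl.
apply/andP; split => //.
by rewrite -(geq_leqif (mxrank_leqif_sup sub)) mxrankMfree // row_free_unit tpow_unitmx.
Qed.
End Mx.

Section Chain.
Variables (F : fieldType) (dim : nat) (s : nat -> 'M[F]_dim).

Fixpoint chain (a n : nat) : 'M[F]_dim :=
  if n is n'.+1 then s a *m chain a.+1 n' else 1%:M.

Lemma chainSr a n : chain a n.+1 = chain a n *m s (a + n).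
Proof.
elim: n a => [|n IH] a; first by rewrite /= mulmx1 mul1mx addn0.
change (chain a n.+2) with (s a *m chain a.+1 n.+1); rewrite IH.
by change (chain a n.+1) with (s a *m chain a.+1 n); rewrite mulmxA addSnnS.
Qed.

Lemma foldl_chain m (x : 'M[F]_(m, dim)) a n :
  foldl (fun y i => y *m s i) x (iota a n) = x *m chain a n.
Proof.
elim: n a x => [|n IH] a x /=; first by rewrite mulmx1.
by rewrite IH mulmxA.
Qed.

Lemma chain_comm c a n : (forall i, (a <= i < a + n)%N -> s c *m s i = s i *m s c) ->
  s c *m chain a n = chain a n *m s c.
Proof.
elim: n a => [|n IH] a H /=; first by rewrite mulmx1 mul1mx.
rewrite mulmxA H; last by lia.
rewrite -!mulmxA IH // => i hi; apply: H; lia.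
Qed.

Lemma chain_unitmx a n : (forall i, (a <= i < a + n)%N -> s i \in unitmx) ->
  chain a n \in unitmx.
Proof.
elim: n a => [|n IH] a H /=; first exact: unitmx1.
rewrite unitmx_mul; apply/andP; split; first by apply: H; lia.
by apply: IH => i hi; apply: H; lia.
Qed.

Fixpoint ladder (n : nat) : 'M[F]_dim :=
  if n is n'.+1 then ladder n' *m (s n'.+2 *m s n'.+1) else 1%:M.

Variable m : nat.
Hypothesis s_braid : forall i, (1 <= i <= m.+1)%N ->
  s i *m s i.+1 *m s i = s i.+1 *m s i *m s i.+1.
Hypothesis s_comm : forall i j, (1 <= i)%N -> (i.+2 <= j <= m.+2)%N ->
  s i *m s j = s j *m s i.

Lemma chain_pair_ladder n : (n <= m.+1)%N -> chain 2 n *m chain 1 n = ladder n.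
Proof.
elim: n => [|n IH] hn; first by rewrite /= mulmx1.
rewrite !chainSr add2n add1n.
change (ladder n.+1) with (ladder n *m (s n.+2 *m s n.+1)); rewrite -IH; last lia.
rewrite -!mulmxA; congr (_ *m _); rewrite !mulmxA; congr (_ *m _).
rewrite chain_comm // => i hi; symmetry; apply: s_comm; lia.
Qed.

Lemma ladder_shift n : (n <= m.+1)%N -> s 1 *m ladder n = ladder n *m s n.+1.
Proof.
elim: n => [|n IH] hn; first by rewrite /= mulmx1 mul1mx.
change (ladder n.+1) with (ladder n *m (s n.+2 *m s n.+1)).
rewrite mulmxA IH; last lia.
rewrite -!mulmxA; congr (_ *m _); rewrite !mulmxA s_braid //; lia.
Qed.

Lemma braid_chain_pair :
  s 1 *m chain 2 m.+1 *m chain 1 m.+1 = chain 2 m.+1 *m chain 1 m.+1 *m s m.+2.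
Proof. by rewrite -mulmxA chain_pair_ladder // ladder_shift. Qed.
End Chain.

Section Tensors.
Variables (K : fieldType) (d : nat).
Notation rk := enum_rank.

Lemma coefE p (x : tens K d p) (w : word d p) : coef x w = x 0 (rk w).
Proof. by []. Qed.

Lemma ffun_val_eq p (z : word d p.+1) (i j : 'I_p.+1) : val i = val j -> z i = z j.
Proof. by move=> h; congr (z _); apply: val_inj. Qed.

Lemma tmullE p (v : 'rV[K]_d) (y : tens K d p.+1) r (z : word d p.+2) :
  tmull v y r (rk z) = v 0 (z ord0) * coef y (subword p 1 z).
Proof.
rewrite mxE enum_rankK; congr (_ * coef y _); apply/ffunP => j; rewrite !ffunE.
by apply: ffun_val_eq; rewrite /= (@inordK p.+1) //; have := ltn_ord j; lia.
Qed.

Lemma tmulrE p (y : tens K d p.+1) (u : 'rV[K]_d) r (z : word d p.+2) :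
  tmulr y u r (rk z) = coef y (subword p 0 z) * u 0 (z ord_max).
Proof.
rewrite mxE enum_rankK; congr (coef y _ * _); apply/ffunP => j; rewrite !ffunE.
by apply: ffun_val_eq; rewrite /= (@inordK p.+1) //; have := ltn_ord j; lia.
Qed.

Lemma tmull_liftop p (R : 'M[K]_(N d 2)) v (y : tens K d p.+1) i :
  (1 <= i <= p)%N ->
  tmull v y *m liftop R p.+2 i.+1 = tmull v (y *m liftop R p.+1 i).
Proof.
move=> /andP[h1 h2].
rewrite (@liftop_window_op K d R p.+1 i.+1) // (@liftop_window_op K d R p i) //=.
apply: eq_row_words => r w; rewrite mulmx_window_op1; last lia.
rewrite tmullE coefE mulmx_window_op1; last lia.
rewrite mulr_sumr; apply: eq_bigr => s _; rewrite tmullE coefE mulrA.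
rewrite subword_splice_in; try lia.
rewrite subn1 (@subword_subword d p.+1 1 p 1 i.-1) ?add1n ?prednK //; try lia.
congr (_ * _ * _); rewrite ffunE /in_window /=.
by have -> : ((i <= 0) && (0 < i + 2))%N = false by lia.
Qed.

Lemma tmulr_liftop p (R : 'M[K]_(N d 2)) (y : tens K d p.+1) u i :
  (1 <= i <= p)%N ->
  tmulr y u *m liftop R p.+2 i = tmulr (y *m liftop R p.+1 i) u.
Proof.
move=> /andP[h1 h2]; have h3 : (i <= p.+1)%N by lia.
rewrite (@liftop_window_op K d R p.+1 i) // (@liftop_window_op K d R p i) //.
apply: eq_row_words => r w; rewrite mulmx_window_op1; last lia.
rewrite tmulrE coefE mulmx_window_op1; last lia.
rewrite mulr_suml; apply: eq_bigr => s _; rewrite tmulrE coefE mulrAC.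
rewrite subword_splice_in; try lia.
rewrite subn0 (@subword_subword d p.+1 1 p 0 i.-1) ?add0n //; try lia.
congr (_ * _ * _); rewrite ffunE /in_window /=.
by have -> : ((i.-1 <= p.+1) && (p.+1 < i.-1 + 2))%N = false by lia.
Qed.

(* tmul2l t x = x (x) t,  tmul2r t y = t (x) y,  tmulvv a b = a (x) b. *)
Definition tmul2l m (t : tens K d m.+1) (x : tens K d 2) : tens K d m.+3 :=
  \row_k let z : word d m.+3 := enum_val k in coef x (subword 1 0 z) * coef t (subword m 2 z).

Definition tmul2r m (t : tens K d m.+1) (y : tens K d 2) : tens K d m.+3 :=
  \row_k let z : word d m.+3 := enum_val k in coef t (subword m 0 z) * coef y (subword 1 m.+1 z).

Definition tmulvv (a b : 'rV[K]_d) : tens K d 2 :=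
  \row_k (a 0 ((enum_val k : word d 2) ord0) * b 0 ((enum_val k : word d 2) ord_max)).

Lemma tmul2lE m t x r (z : word d m.+3) :
  @tmul2l m t x r (rk z) = coef x (subword 1 0 z) * coef t (subword m 2 z).
Proof. by rewrite mxE enum_rankK. Qed.

Lemma tmul2rE m t y r (z : word d m.+3) :
  @tmul2r m t y r (rk z) = coef t (subword m 0 z) * coef y (subword 1 m.+1 z).
Proof. by rewrite mxE enum_rankK. Qed.

Lemma tmulvvE a b r (z : word d 2) :
  tmulvv a b r (rk z) = a 0 (z ord0) * b 0 (z ord_max).
Proof. by rewrite mxE enum_rankK. Qed.

Lemma tmul2l_liftop m t (R : 'M[K]_(N d 2)) x :
  @tmul2l m t x *m liftop R m.+3 1 = tmul2l t (x *m R).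
Proof.
rewrite (@liftop_window_op K d R m.+2 1) //=.
apply: eq_row_words => r w.
rewrite mulmx_window_op1 // tmul2lE coefE mulmx_wordE mulr_suml.
apply: eq_bigr => s _; rewrite tmul2lE subword_splice // subword_splice_disj //.
by rewrite !coefE mulrAC.
Qed.

Lemma tmul2r_liftop m t (R : 'M[K]_(N d 2)) y :
  @tmul2r m t y *m liftop R m.+3 m.+2 = tmul2r t (y *m R).
Proof.
rewrite (@liftop_window_op K d R m.+2 m.+2) //=.
apply: eq_row_words => r w; rewrite mulmx_window_op1; last lia.
rewrite tmul2rE [coef (_ *m _) _]coefE mulmx_wordE mulr_sumr.
apply: eq_bigr => s _; rewrite tmul2rE subword_splice; last lia.
rewrite subword_splice_disj; try lia.
by rewrite !coefE mulrA.
Qed.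

Lemma tmul2l_sum m t (c : 'I_(N d 2) -> K) (y : 'I_(N d 2) -> tens K d 2) :
  @tmul2l m t (\sum_j c j *: y j) = \sum_j c j *: tmul2l t (y j).
Proof.
apply: eq_row_words => r z; rewrite tmul2lE coefE summxE mulr_suml summxE.
by apply: eq_bigr => j _; rewrite !mxE !enum_rankK !coefE mulrA.
Qed.

Lemma tmul2r_sum m t (c : 'I_(N d 2) -> K) (y : 'I_(N d 2) -> tens K d 2) :
  @tmul2r m t (\sum_j c j *: y j) = \sum_j c j *: tmul2r t (y j).
Proof.
apply: eq_row_words => r z; rewrite tmul2rE [coef (\sum__ _) _]coefE.
rewrite summxE mulr_sumr summxE.
by apply: eq_bigr => j _; rewrite !mxE !enum_rankK !coefE mulrCA.
Qed.

Lemma tmul2l_delta m t (w : word d 2) :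
  @tmul2l m t (delta_mx 0 (rk w)) =
  tmull (delta_mx 0 (w ord0)) (tmull (delta_mx 0 (w ord_max)) t).
Proof.
apply: eq_row_words => r z; rewrite tmul2lE tmullE [coef (tmull _ _) _]coefE tmullE.
rewrite [coef _ (subword 1 0 z)]coefE !mxE (inj_eq enum_rank_inj) eqxx /=.
rewrite (@subword_subword d m.+2 m m.+1 1 1) //.
rewrite word2_eqE !ffunE /= -mulnb natrM -mulrA !addn0 add0n.
rewrite (_ : z (inord 0) = z ord0) //.
by apply: ffun_val_eq; rewrite /= (@inordK m.+2).
Qed.

Lemma tmul2r_tmulvv m t a b :
  @tmul2r m t (tmulvv a b) = tmulr (tmulr t a) b.
Proof.
apply: eq_row_words => r z; rewrite tmul2rE tmulrE [coef (tmulr _ _) _]coefE tmulrE.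
rewrite [coef (tmulvv _ _) _]coefE tmulvvE.
rewrite (@subword_subword d m.+2 m m.+1 0 0) // !ffunE mulrA !addn0 add0n /=.
rewrite (_ : z (inord (m.+1 + 1)) = z ord_max) //.
by apply: ffun_val_eq; rewrite /= (@inordK m.+2) ?addn1.
Qed.

Lemma tmull_tmulr m (t : tens K d m.+1) v u :
  tmull v (tmulr t u) = tmulr (tmull v t) u.
Proof.
apply: eq_row_words => r z; rewrite tmullE [coef (tmulr _ _) _]coefE tmulrE.
rewrite tmulrE [coef (tmull _ _) _]coefE tmullE.
rewrite (@subword_subword d m.+2 m m.+1 1 0) // (@subword_subword d m.+2 m m.+1 0 1) //.
rewrite !ffunE mulrA; congr (v 0 _ * _ * u 0 _); apply: ffun_val_eq => /=;
  rewrite ?(@inordK m.+2) //; lia.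
Qed.

Lemma delta_tpow2 (th : 'M[K]_d) (w : word d 2) :
  delta_mx 0 (rk w) *m tpow th 2 =
  tmulvv (delta_mx 0 (w ord0) *m th) (delta_mx 0 (w ord_max) *m th).
Proof.
apply: eq_row_words => r z; rewrite tmulvvE -!rowE [LHS]mxE tpowE !mxE.
rewrite (bigD1 ord0) // (bigD1 ord_max) // big1 /=; first by rewrite mulr1.
move=> j /andP[h0 h1].
by move: h0 h1; case: j => [[|[|//]] hj].
Qed.

Lemma tmulr0 p (y : tens K d p.+1) : tmulr y 0 = 0.
Proof. by apply: eq_row_words => r z; rewrite tmulrE !mxE mulr0. Qed.

Lemma coef_neq0 p (t : tens K d p) : t != 0 -> exists s0 : word d p, coef t s0 != 0.
Proof.
move=> tn0; case: (pickP (fun k : 'I_(N d p) => t 0 k != 0)) => [k hk|H].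
  by exists (enum_val k); rewrite coefE enum_valK.
exfalso; move/eqP: tn0; apply; apply/rowP => k; rewrite mxE.
by have := H k => /negbFE/eqP.
Qed.

Lemma tmul2r_inj m (t : tens K d m.+1) y y' :
  t != 0 -> tmul2r t y = tmul2r t y' -> y = y'.
Proof.
move=> tn0 E; have [s0 hs0] := coef_neq0 tn0.
apply: eq_row_words => r w; rewrite (ord1 r) -!coefE.
pose z : word d m.+3 :=
  [ffun j : 'I_m.+3 => if (j < m.+1)%N then s0 (inord j) else w (inord (j - m.+1))].
have e1 : subword m 0 z = s0.
  apply/ffunP => i; have hi := ltn_ord i; rewrite !ffunE (@inordK m.+2) /=; last lia.
  by rewrite hi inord_val.
have e2 : subword 1 m.+1 z = w.
  apply/ffunP => i; have hi := ltn_ord i; rewrite !ffunE (@inordK m.+2) /=; last lia.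
  have -> : (m.+1 + i < m.+1)%N = false by lia.
  by rewrite addKn inord_val.
have := congr1 (fun Z : tens K d m.+3 => Z 0 (rk z)) E; rewrite /= !tmul2rE e1 e2.
exact: mulfI.
Qed.

Lemma tmull_eq0 p (t : tens K d p.+1) v : t != 0 -> tmull v t = 0 -> v = 0.
Proof.
move=> tn0 E; have [s0 hs0] := coef_neq0 tn0.
apply/rowP => c; rewrite [RHS]mxE.
pose z : word d p.+2 :=
  [ffun j : 'I_p.+2 => if (j == 0%N :> nat) then c else s0 (inord j.-1)].
have e1 : subword p 1 z = s0.
  apply/ffunP => i; have hi := ltn_ord i; rewrite !ffunE (@inordK p.+1) /=; last lia.
  by rewrite inord_val.
have := congr1 (fun Z : tens K d p.+2 => Z 0 (rk z)) E; rewrite /= tmullE e1 mxE ffunE /=.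
by move/eqP; rewrite mulf_eq0 (negbTE hs0) orbF => /eqP.
Qed.

Lemma RchainE (R : 'M[K]_(N d 2)) n (x : tens K d n.+1) :
  Rchain R x = x *m chain (liftop R n.+1) 1 n.
Proof. by rewrite /Rchain foldl_chain. Qed.

Lemma tmull_chain (R : 'M[K]_(N d 2)) p v (y : tens K d p.+1) k : (k <= p)%N ->
  tmull v y *m chain (liftop R p.+2) 2 k = tmull v (y *m chain (liftop R p.+1) 1 k).
Proof.
elim: k => [|k IH] hk; first by rewrite /= !mulmx1.
rewrite !chainSr mulmxA IH; last lia.
by rewrite add2n add1n tmull_liftop ?mulmxA //; lia.
Qed.

Lemma tmulr_chain (R : 'M[K]_(N d 2)) p (y : tens K d p.+1) u k : (k <= p)%N ->
  tmulr y u *m chain (liftop R p.+2) 1 k = tmulr (y *m chain (liftop R p.+1) 1 k) u.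
Proof.
elim: k => [|k IH] hk; first by rewrite /= !mulmx1.
rewrite !chainSr mulmxA IH; last lia.
by rewrite add1n tmulr_liftop ?mulmxA //; lia.
Qed.
End Tensors.

Lemma hecke_unitmx (K : fieldType) n (R : 'M[K]_n) q :
  q != 0 -> (R - q%:M) *m (R + 1%:M) = 0 -> R \in unitmx.
Proof.
move=> q_neq0 heckeR; apply: (proj1 (@mulmx1_unit _ _ _ (q^-1 *: (R + 1%:M - q%:M)) _)).
have RR1 : R *m (R + 1%:M) = q *: (R + 1%:M).
  by apply/eqP; rewrite -subr_eq0 -mul_scalar_mx -mulmxBl heckeR.
rewrite -scalemxAr mulmxBr RR1 mul_mx_scalar scalerDr.
by rewrite scalerN !scalerA mulVf // !scale1r addrAC subrr add0r.
Qed.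

Section Commutation.
Variables (K : fieldType) (d m : nat) (R : 'M[K]_(N d 2)).
Variables (t : tens K d m.+1) (theta : 'M[K]_d).
Hypothesis braidR :
  Rop R 3 1 *m Rop R 3 2 *m Rop R 3 1 = Rop R 3 2 *m Rop R 3 1 *m Rop R 3 2.
Hypothesis t_neq0 : t != 0.
Hypothesis thetaP : forall v : 'rV[K]_d, Rchain R (tmull v t) = tmulr t (v *m theta).

Local Notation L := (liftop R m.+3).

Lemma thetaP_chain v : tmull v t *m chain (liftop R m.+2) 1 m.+1 = tmulr t (v *m theta).
Proof. by rewrite -RchainE thetaP. Qed.

Lemma tmul2l_chain x :
  tmul2l t x *m chain L 2 m.+1 *m chain L 1 m.+1 = tmul2r t (x *m tpow theta 2).
Proof.
rewrite {1}[x]row_sum_delta tmul2l_sum !mulmx_suml.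
transitivity (\sum_(j < N d 2) x 0 j *: tmul2r t ('e_j *m tpow theta 2)).
  apply: eq_bigr => j _; rewrite -!scalemxAl; congr (_ *: _).
  rewrite -(enum_valK j) tmul2l_delta tmull_chain // thetaP_chain tmull_tmulr.
  by rewrite tmulr_chain // thetaP_chain delta_tpow2 tmul2r_tmulvv.
rewrite -tmul2r_sum {2}[x]row_sum_delta mulmx_suml; congr (tmul2r t _).
by apply: eq_bigr => j _; rewrite scalemxAl.
Qed.

Lemma braid_liftop_chain :
  L 1 *m chain L 2 m.+1 *m chain L 1 m.+1 = chain L 2 m.+1 *m chain L 1 m.+1 *m L m.+2.
Proof.
by apply: braid_chain_pair => [i|i j] *; [apply: liftop_braid | apply: liftop_comm].
Qed.

Lemma tpow2_commute : tpow theta 2 *m R = R *m tpow theta 2.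
Proof.
apply/row_matrixP => i; rewrite !rowE; apply: (tmul2r_inj t_neq0).
rewrite !mulmxA -tmul2r_liftop -!tmul2l_chain -tmul2l_liftop.
(* Abstracting the chains keeps congr from unfolding them. *)
move: (chain L 2 m.+1) (chain L 1 m.+1) braid_liftop_chain => C2 C1 braidC.
by rewrite -!mulmxA; congr (_ *m _); rewrite !mulmxA braidC.
Qed.

Lemma theta_unitmx : R \in unitmx -> theta \in unitmx.
Proof.
move=> R_unit; rewrite -row_free_unit; apply: inj_row_free => v v_theta.
apply: (tmull_eq0 t_neq0).
have chain_unit : chain (liftop R m.+2) 1 m.+1 \in unitmx.
  by apply: chain_unitmx => i hi; apply: liftop_unitmx => //; lia.
have := thetaP_chain v; rewrite v_theta tmulr0 => chain0.
by rewrite -[tmull v t]mulmx1 -(mulmxV chain_unit) mulmxA chain0 mul0mx.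
Qed.
End Commutation.

Unset Implicit Arguments. Set Strict Implicit.

Theorem corollary3p3 (K : fieldType) (d : nat) (R : 'M[K]_(N d 2)) (q : K)
  (n : nat) (t : tens K d n) (theta : 'M[K]_d) :
  q != 0 -> hecke R q -> (0 < n)%N ->
  \rank (Ups R q n) = 1%N -> \rank (Ups R q n.+1) = 0%N ->
  t != 0 -> (t <= Ups R q n)%MS ->
  (forall v : 'rV[K]_d, Rchain R (tmull v t) = tmulr t (v *m theta)) ->
  tpow theta 2 *m R = R *m tpow theta 2
  /\ (forall p : nat,
        (idealComp (kermx (R - q%:M)) p *m tpow theta p
          == idealComp (kermx (R - q%:M)) p)%MS
        /\ (idealComp (R - q%:M) p *m tpow theta p
          == idealComp (R - q%:M) p)%MS).
Proof.
move=> q_neq0 [braidR heckeR] n_gt0 _ _ t_neq0 _ thetaP.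
case: n n_gt0 t t_neq0 thetaP => [//|m] _ t t_neq0 thetaP.
have commR := tpow2_commute braidR t_neq0 thetaP.
have theta_unit := theta_unitmx t_neq0 thetaP (hecke_unitmx q_neq0 heckeR).
split=> // p; split; apply: idealComp_tpow_eq => //.
  by rewrite sub_kermx -mulmxA mulmxBr commR scalar_mxC -mulmxBl mulmxA mulmx_ker mul0mx.
by rewrite mulmxBl -commR -scalar_mxC -mulmxBr submxMl.
Qed.
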